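(* Let $M,K\ge 1$, $\mathcal K=\{1,\dots,K\}$, channels $\mathbf h_1,\dots,\mathbf h_K\in\mathbb C^{M}$, power budget $P>0$, weights $\mathbf u=(u_1,\dots,u_K)\in\mathbb R_{\ge 0}^K\setminus\{\mathbf 0\}$, $\mu\ge 0$, $P_c>0$ and rate thresholds $R_k^{th}\ge 0$ be given. For precoders $\mathbf p_c,\mathbf p_1,\dots,\mathbf p_K\in\mathbb C^M$ define $$\gamma_{c,k}=\frac{|\mathbf h_k^H\mathbf p_c|^2}{\sum_{j\in\mathcal K}|\mathbf h_k^H\mathbf p_j|^2+1},\qquad \gamma_{p,k}=\frac{|\mathbf h_k^H\mathbf p_k|^2}{\sum_{j\in\mathcal K\setminus\{k\}}|\mathbf h_k^H\mathbf p_j|^2+1},$$ and let $\Phi(\mathbf p,\mathbf c,\boldsymbol\gamma_p)=\dfrac{\sum_{k\in\mathcal K}u_k\big(C_k+\log(1+\gamma_{p,k})\big)}{\mu\big(\|\mathbf p_c\|^2+\sum_{k}\|\mathbf p_k\|^2\big)+P_c}$. Problem (A): maximize $\Phi$ over $\mathbf p_c,\mathbf p_1,\dots,\mathbf p_K$, $\mathbf c=(C_1,\dots,C_K)\in\mathbb R^K$, $\boldsymbol\gamma_c,\boldsymbol\gamma_p$ subject to: $\gamma_{c,k},\gamma_{p,k}$ given by the SINR formulas above; $\sum_{k'\in\mathcal K}C_{k'}\le\log(1+\gamma_{c,k})$ for all $k$; $C_k\ge\max\{0,R_k^{th}-\log(1+\gamma_{p,k})\}$ for all $k$; $\|\mathbf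 p_c\|^2+\sum_k\|\mathbf p_k\|^2\le P$. Problem (B): maximize $\Phi$ over $\mathbf p_c,\mathbf p_1,\dots,\mathbf p_K$, $\mathbf c\in\mathbb R^K$, $\boldsymbol\gamma_p\in\mathbb R_{\ge0}^K$, $s\ge 0$, $d_k\in\mathbb R$ and $e_k\in\mathbb C$ ($k=2,\dots,K$), subject to: (i) $\sqrt{\gamma_{p,k}}\big(\sum_{j\ne k}|\mathbf h_k^H\mathbf p_j|^2+1\big)^{1/2}\le \mathbf h_k^H\mathbf p_k$ for all $k$; (ii) $\sqrt{s}\big(\sum_{j\in\mathcal K}|\mathbf h_1^H\mathbf p_j|^2+1\big)^{1/2}\le\mathbf h_1^H\mathbf p_c$; (iii) $\sqrt{s}\big(\sum_{j\in\mathcal K}|\mathbf h_k^H\mathbf p_j|^2+1\big)^{1/2}\le d_k$ for all $k>1$; (iv) $d_k\le|e_k|$ for all $k>1$; (v) $\operatorname{Re}\{\mathbf h_k^H\mathbf p_k\}\ge 0$, $\operatorname{Im}\{\mathbf h_k^H\mathbf p_k\}=0$ for all $k$; (vi) $\operatorname{Re}\{\mathbf h_1^H\mathbf p_c\}\ge0$, $\operatorname{Im}\{\mathbf h_1^H\mathbf p_c\}=0$; (vii) $d_k\ge 0$ and $e_k=\mathbf h_k^H\mathbf p_c$ for all $k>1$; (viii) $\sum_{k}C_k\le\log(1+s)$; (ix) $C_k\ge\max\{0,R_k^{th}-\log(1+\gamma_{p,k})\}$ for all $k$, and $\|\mathbf p_c\|^2+\sum_k\|\mathbf p_k\|^2\le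 P$. (In (B), $\gamma_{p,k}$ is a free variable, not defined by the SINR formula.) Then problems (A) and (B) have the same optimal value, and for every optimal solution $(\mathbf p_c,\mathbf p_1,\dots,\mathbf p_K,\mathbf c,\boldsymbol\gamma_p,s,\mathbf d,\mathbf e)$ of (B), the precoders $(\mathbf p_c,\mathbf p_1,\dots,\mathbf p_K)$ together with $\mathbf c$ and the SINRs $\gamma_{c,k},\gamma_{p,k}$ computed from these precoders by the formulas above form an optimal solution of (A).
   Context: Rate-splitting downlink model: a base station with $M$ antennas serves $K$ single-antenna users with channels $\mathbf h_k$; $\mathbf p_c$ is the common-message precoder and $\mathbf p_k$ the private precoder of user $k$; $C_k$ is the portion of the common rate allocated to user $k$. Logarithms are base 2. Inequalities involving complex quantities such as $\mathbf h_k^H\mathbf p_k$ are meaningful because the constraints force these quantities to be real. *)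

From HB Require Import structures.
From mathcomp Require Import all_boot all_order all_algebra.
From mathcomp Require Import complex.
From mathcomp Require Import all_classical all_reals all_analysis.
Set Implicit Arguments. Unset Strict Implicit. Unset Printing Implicit Defensive.
Import Order.TTheory GRing.Theory Num.Theory.
Local Open Scope ring_scope.
Local Open Scope classical_set_scope.
Local Open Scope complex_scope.

Section RSMA.
Variable R : realType.

Definition log2 (x : R) : R := ln x / ln 2.

Definition cabs2 (z : R[i]) : R := (complex.Re z) ^+ 2 + (complex.Im z) ^+ 2.

Definition hdot (M : nat) (h p : 'I_M -> R[i]) : R[i] :=
  \sum_(i < M) (h i)^* * p i.

Definition sqnorm (M : nat) (p : 'I_M -> R[i]) : R :=
  \sum_(i < M) cabs2 (p i).

Variables (M K : nat) (h : 'I_K -> 'I_M -> R[i]).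

Definition totpow (pc : 'I_M -> R[i]) (p : 'I_K -> 'I_M -> R[i]) : R :=
  sqnorm pc + \sum_(k < K) sqnorm (p k).

Definition sinr_c (pc : 'I_M -> R[i]) (p : 'I_K -> 'I_M -> R[i]) (k : 'I_K) : R :=
  cabs2 (hdot (h k) pc) / (\sum_(j < K) cabs2 (hdot (h k) (p j)) + 1).

Definition sinr_p (p : 'I_K -> 'I_M -> R[i]) (k : 'I_K) : R :=
  cabs2 (hdot (h k) (p k)) / (\sum_(j < K | j != k) cabs2 (hdot (h k) (p j)) + 1).

Variables (P : R) (u : 'I_K -> R) (mu Pc : R) (Rth : 'I_K -> R).

Definition Phi (pc : 'I_M -> R[i]) (p : 'I_K -> 'I_M -> R[i])
    (c : 'I_K -> R) (gp : 'I_K -> R) : R :=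
  (\sum_(k < K) u k * (c k + log2 (1 + gp k))) / (mu * totpow pc p + Pc).

Definition feasA (pc : 'I_M -> R[i]) (p : 'I_K -> 'I_M -> R[i])
    (c gc gp : 'I_K -> R) : Prop :=
  [/\ (forall k, gc k = sinr_c pc p k),
      (forall k, gp k = sinr_p p k),
      (forall k, \sum_(k' < K) c k' <= log2 (1 + gc k)),
      (forall k, Num.max 0 (Rth k - log2 (1 + gp k)) <= c k)
    & totpow pc p <= P].

(* feasible set of problem (B); k1 is the first user (user 1).
   d k1 and e k1 are dummy (unconstrained, irrelevant) coordinates. *)
Definition feasB (k1 : 'I_K) (pc : 'I_M -> R[i]) (p : 'I_K -> 'I_M -> R[i])
    (c gp : 'I_K -> R) (s : R) (d : 'I_K -> R) (e : 'I_K -> R[i]) : Prop :=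
  (forall k, 0 <= gp k) /\ 0 <= s /\
  (forall k, Num.sqrt (gp k) *
     Num.sqrt (\sum_(j < K | j != k) cabs2 (hdot (h k) (p j)) + 1)
     <= complex.Re (hdot (h k) (p k))) /\
  Num.sqrt s * Num.sqrt (\sum_(j < K) cabs2 (hdot (h k1) (p j)) + 1)
     <= complex.Re (hdot (h k1) pc) /\
  (forall k, k != k1 ->
     Num.sqrt s * Num.sqrt (\sum_(j < K) cabs2 (hdot (h k) (p j)) + 1) <= d k) /\
  (forall k, k != k1 -> d k <= Num.sqrt (cabs2 (e k))) /\
  (forall k, 0 <= complex.Re (hdot (h k) (p k)) /\ complex.Im (hdot (h k) (p k)) = 0) /\
  (0 <= complex.Re (hdot (h k1) pc) /\ complex.Im (hdot (h k1) pc) = 0) /\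
  (forall k, k != k1 -> 0 <= d k /\ e k = hdot (h k) pc) /\
  \sum_(k < K) c k <= log2 (1 + s) /\
  (forall k, Num.max 0 (Rth k - log2 (1 + gp k)) <= c k) /\
  totpow pc p <= P.

Local Open Scope ereal_scope.

Definition optvalA : \bar R :=
  ereal_sup [set r | exists pc p c gc gp,
    feasA pc p c gc gp /\ r = (Phi pc p c gp)%:E].

Definition optvalB (k1 : 'I_K) : \bar R :=
  ereal_sup [set r | exists pc p c gp s d e,
    feasB k1 pc p c gp s d e /\ r = (Phi pc p c gp)%:E].

Local Close Scope ereal_scope.

Definition optA pc p c gc gp : Prop :=
  feasA pc p c gc gp /\
  forall pc' p' c' gc' gp', feasA pc' p' c' gc' gp' ->
    Phi pc' p' c' gp' <= Phi pc p c gp.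

Definition optB k1 pc p c gp s d e : Prop :=
  feasB k1 pc p c gp s d e /\
  forall pc' p' c' gp' s' d' e', feasB k1 pc' p' c' gp' s' d' e' ->
    Phi pc' p' c' gp' <= Phi pc p c gp.

End RSMA.

(* Both problems share the objective Phi, which is nondecreasing in the
   private-rate variables gamma_p.  The argument has two directions.
   - (B) relaxes (A): squaring the second-order-cone constraints (i)-(iv)
     shows that gamma_p k and s are bounded by the true SINRs computed from
     the precoders, so a feasible point of (B) gives a feasible point of (A)
     with the same precoders and common rates and a larger objective.
   - (A) embeds in (B): multiplying each private precoder p_k and the common
     precoder p_c by a unit-modulus phase makes h_k^H p_k and h_1^H p_c real
     and nonnegative without changing any |h^H p|^2 or the transmit power;
     then s := min_k gamma_c,k, d_k := sqrt s * (interference_k)^(1/2) and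
     e_k := h_k^H p_c give a feasible point of (B) with the same objective. *)
From HB Require Import structures.
From mathcomp Require Import all_boot all_order all_algebra.
From mathcomp Require Import complex.
From mathcomp Require Import all_classical all_reals all_analysis.
From mathcomp Require Import ring.
Import Order.TTheory GRing.Theory Num.Theory.
Set Implicit Arguments. Unset Strict Implicit. Unset Printing Implicit Defensive.
Local Open Scope ring_scope.
Local Open Scope complex_scope.

Section ComplexFacts.
Variable R : realType.
Implicit Types z w : R[i].

Lemma cabs2_ge0 z : 0 <= cabs2 z.
Proof. by rewrite /cabs2 addr_ge0 // sqr_ge0. Qed.

Lemma cabs2M z w : cabs2 (z * w) = cabs2 z * cabs2 w.
Proof. by case: z => a b; case: w => c d; rewrite /cabs2 /=; ring. Qed.

Lemma real_cabs2 z : 0 <= complex.Re z -> complex.Im z = 0 ->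
  complex.Re z = Num.sqrt (cabs2 z).
Proof. by move=> re0 im0; rewrite /cabs2 im0 expr0n /= addr0 sqrtr_sqr ger0_norm. Qed.

Definition phase z : R[i] :=
  let n := Num.sqrt (cabs2 z) in
  if n == 0 then 1 else Complex (complex.Re z / n) (- complex.Im z / n).

Lemma cabs2_phase z : cabs2 (phase z) = 1.
Proof.
rewrite /phase; case: ifP => [_|]; first by rewrite /cabs2 /= expr0n addr0 expr1n.
case: z => a b; rewrite /cabs2 /= => /negbT n_neq0.
rewrite !expr_div_n sqrrN -mulrDl -[X in X / _](@sqr_sqrtr _ (a ^+ 2 + b ^+ 2)).
  by rewrite divff // expf_neq0.
by rewrite addr_ge0 // sqr_ge0.
Qed.

Lemma phaseK z : phase z * z = (Num.sqrt (cabs2 z))%:C.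
Proof.
rewrite /phase; case: ifP => [/eqP n0|/negbT].
  rewrite n0 mul1r; move/eqP: n0; rewrite sqrtr_eq0.
  case: z => a b; rewrite /cabs2 /= => sum_le0.
  have /andP[a2 b2] : (a ^+ 2 == 0) && (b ^+ 2 == 0).
    by rewrite -paddr_eq0 ?sqr_ge0 // eq_le sum_le0 addr_ge0 ?sqr_ge0.
  by move: a2 b2; rewrite !expf_eq0 /= => /eqP-> /eqP->.
case: z => a b; rewrite /cabs2 /= => n_neq0.
have n2 : Num.sqrt (a ^+ 2 + b ^+ 2) ^+ 2 = a ^+ 2 + b ^+ 2.
  by rewrite sqr_sqrtr // addr_ge0 // sqr_ge0.
set n := Num.sqrt _ in n_neq0 n2 *.
apply/eqP; rewrite eq_complex /=; apply/andP; split; apply/eqP; last by field.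
by apply: (mulIf n_neq0); rewrite -expr2 n2; field.
Qed.

End ComplexFacts.

Lemma ler_log2 (R : realType) (x y : R) : 0 < x -> x <= y -> log2 x <= log2 y.
Proof.
move=> x_gt0 xy; rewrite /log2 ler_wpM2r //.
  by rewrite invr_ge0 ltW // ln_gt0 // ltr1n.
by rewrite ler_ln // posrE (lt_le_trans x_gt0 xy).
Qed.

Lemma ler_log2_1D (R : realType) (x y : R) : 0 <= x -> x <= y ->
  log2 (1 + x) <= log2 (1 + y).
Proof. by move=> x_ge0 xy; rewrite ler_log2 ?lerD2l // (lt_le_trans ltr01) // lerDl. Qed.

Lemma soc_ratioE (R : realType) (g a D : R) : 0 < D -> 0 <= g -> 0 <= a ->
  (Num.sqrt g * Num.sqrt D <= Num.sqrt a) = (g <= a / D).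
Proof. by move=> D_gt0 g_ge0 a_ge0; rewrite -sqrtrM // ler_sqrt // ler_pdivlMr. Qed.

Lemma exists_lower_bound (R : realDomainType) (n : nat) (i0 : 'I_n)
    (x : 'I_n -> R) (Q : R -> Prop) :
  (forall i, Q (x i)) -> exists2 m, Q m & forall i, m <= x i.
Proof.
move=> Qx; exists (\big[Order.min/x i0]_i x i).
  by apply: big_ind => // a b Qa Qb; rewrite minElt; case: ifP.
by move=> i; rewrite (bigD1 i) //= ge_min lexx.
Qed.

Section Precoders.
Variables (R : realType) (M K : nat) (h : 'I_K -> 'I_M -> R[i]).

Lemma sqnorm_ge0 (q : 'I_M -> R[i]) : 0 <= sqnorm q.
Proof. by apply: sumr_ge0 => i _; apply: cabs2_ge0. Qed.

Lemma totpow_ge0 pc (p : 'I_K -> 'I_M -> R[i]) : 0 <= totpow pc p.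
Proof. by rewrite /totpow addr_ge0 ?sqnorm_ge0 // sumr_ge0 // => k _; apply: sqnorm_ge0. Qed.

Lemma interference_gt0 (P : pred 'I_K) (x : 'I_K -> R[i]) :
  0 < \sum_(j < K | P j) cabs2 (x j) + 1.
Proof. by rewrite ltr_wpDl ?sumr_ge0 // => j _; apply: cabs2_ge0. Qed.

Lemma sinr_p_ge0 (p : 'I_K -> 'I_M -> R[i]) k : 0 <= sinr_p h p k.
Proof. by rewrite /sinr_p divr_ge0 ?cabs2_ge0 ?ltW ?interference_gt0. Qed.

Lemma sinr_c_ge0 pc (p : 'I_K -> 'I_M -> R[i]) k : 0 <= sinr_c h pc p k.
Proof. by rewrite /sinr_c divr_ge0 ?cabs2_ge0 ?ltW ?interference_gt0. Qed.

Definition rotate (w : R[i]) (q : 'I_M -> R[i]) : 'I_M -> R[i] := fun i => w * q i.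

Lemma hdot_rotate (g : 'I_M -> R[i]) w q : hdot g (rotate w q) = w * hdot g q.
Proof. by rewrite /hdot big_distrr; apply: eq_bigr => i _; rewrite /rotate mulrCA. Qed.

Lemma cabs2_hdot_rotate g w q : cabs2 w = 1 ->
  cabs2 (hdot g (rotate w q)) = cabs2 (hdot g q).
Proof. by move=> w1; rewrite hdot_rotate cabs2M w1 mul1r. Qed.

Lemma sqnorm_rotate w q : cabs2 w = 1 -> sqnorm (rotate w q) = sqnorm q.
Proof. by move=> w1; apply: eq_bigr => i _; rewrite /rotate cabs2M w1 mul1r. Qed.

Lemma align_precoders (k1 : 'I_K) pc (p : 'I_K -> 'I_M -> R[i]) :
  let pc' := rotate (phase (hdot (h k1) pc)) pc in
  let p' k := rotate (phase (hdot (h k) (p k))) (p k) in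
  [/\ forall k j, cabs2 (hdot (h k) (p' j)) = cabs2 (hdot (h k) (p j)),
      forall k, cabs2 (hdot (h k) pc') = cabs2 (hdot (h k) pc),
      totpow pc' p' = totpow pc p,
      forall k, hdot (h k) (p' k) = (Num.sqrt (cabs2 (hdot (h k) (p k))))%:C
    & hdot (h k1) pc' = (Num.sqrt (cabs2 (hdot (h k1) pc)))%:C].
Proof.
split=> [k j|k||k|]; rewrite ?cabs2_hdot_rotate ?hdot_rotate ?phaseK ?cabs2_phase //.
by rewrite /totpow /= sqnorm_rotate ?cabs2_phase //; congr (_ + _);
  apply: eq_bigr => k _; rewrite sqnorm_rotate ?cabs2_phase.
Qed.

End Precoders.

Section Problems.
Variables (R : realType) (M K : nat) (h : 'I_K -> 'I_M -> R[i]).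
Variables (P : R) (u : 'I_K -> R) (mu Pc : R) (Rth : 'I_K -> R).
Hypotheses (u_ge0 : forall k, 0 <= u k) (mu_ge0 : 0 <= mu) (Pc_gt0 : 0 < Pc).

Lemma Phi_mono pc (p : 'I_K -> 'I_M -> R[i]) c (gp gp' : 'I_K -> R) :
  (forall k, 0 <= gp k) -> (forall k, gp k <= gp' k) ->
  Phi u mu Pc pc p c gp <= Phi u mu Pc pc p c gp'.
Proof.
move=> gp_ge0 gp_le; rewrite /Phi ler_wpM2r //.
  by rewrite invr_ge0 addr_ge0 ?mulr_ge0 ?totpow_ge0 // ltW.
by apply: ler_sum => k _; rewrite ler_wpM2l // lerD2l ler_log2_1D.
Qed.

Lemma feasB_sinr_bounds k1 pc p c gp s d e :
  feasB h P Rth k1 pc p c gp s d e ->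
  (forall k, gp k <= sinr_p h p k) /\ (forall k, s <= sinr_c h pc p k).
Proof.
move=> [gp_ge0 [s_ge0 [soc_p [soc_c1 [soc_c [d_le [hp_real [hc1_real [de _]]]]]]]]].
split=> k.
  rewrite /sinr_p -soc_ratioE ?cabs2_ge0 ?interference_gt0 //.
  by have [re_ge0 im0] := hp_real k; rewrite -real_cabs2.
rewrite /sinr_c -soc_ratioE ?cabs2_ge0 ?interference_gt0 //.
have [->|k_neq1] := eqVneq k k1.
  by case: hc1_real => re_ge0 im0; rewrite -real_cabs2.
have [_ <-] := de k k_neq1; exact: le_trans (soc_c k k_neq1) (d_le k k_neq1).
Qed.

Lemma feasB_feasA k1 pc p c gp s d e :
  feasB h P Rth k1 pc p c gp s d e ->
  feasA h P Rth pc p c (sinr_c h pc p) (sinr_p h p) /\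
  Phi u mu Pc pc p c gp <= Phi u mu Pc pc p c (sinr_p h p).
Proof.
move=> feas; have [gp_le s_le] := feasB_sinr_bounds feas.
case: feas => [gp_ge0 [s_ge0 [_ [_ [_ [_ [_ [_ [_ [csum [cmin pow]]]]]]]]]]].
split; last exact: Phi_mono.
split=> // k; first by apply: le_trans csum _; rewrite ler_log2_1D.
apply: le_trans (cmin k); rewrite ge_max le_max lexx /= le_max.
by rewrite lerD2l lerN2 ler_log2_1D ?orbT.
Qed.

Lemma feasA_feasB k1 pc p c gc gp : feasA h P Rth pc p c gc gp ->
  exists pc' p' s d e, feasB h P Rth k1 pc' p' c gp s d e /\
    Phi u mu Pc pc' p' c gp = Phi u mu Pc pc p c gp.
Proof.
move=> [gcE gpE csum cmin pow].
have [rx_p rx_c powE hp_real hc_real] := align_precoders h k1 pc p.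
set pc' := rotate _ pc in rx_c powE hc_real *.
set p' := fun k => _ in rx_p powE hp_real *.
have intf k : \sum_(j < K) cabs2 (hdot (h k) (p' j))
            = \sum_(j < K) cabs2 (hdot (h k) (p j)).
  by apply: eq_bigr => j _; rewrite rx_p.
have intf_p k : \sum_(j < K | j != k) cabs2 (hdot (h k) (p' j))
              = \sum_(j < K | j != k) cabs2 (hdot (h k) (p j)).
  by apply: eq_bigr => j _; rewrite rx_p.
(* the common rate is limited by the weakest user: s := min_k gamma_c,k *)
pose common_ok x := 0 <= x /\ \sum_(k' < K) c k' <= log2 (1 + x).
have gc_ok k : common_ok (gc k).
  by split; [rewrite gcE sinr_c_ge0 | exact: csum].
have [s [s_ge0 csum_s] s_le] := exists_lower_bound k1 gc_ok.
have soc_c k : Num.sqrt s * Num.sqrt (\sum_(j < K) cabs2 (hdot (h k) (p' j)) + 1)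
               <= Num.sqrt (cabs2 (hdot (h k) pc)).
  by rewrite intf soc_ratioE ?cabs2_ge0 ?interference_gt0 // -/(sinr_c h pc p k) -gcE.
pose d k := Num.sqrt s * Num.sqrt (\sum_(j < K) cabs2 (hdot (h k) (p' j)) + 1).
exists pc', p', s, d, (fun k => hdot (h k) pc').
split; last by rewrite /Phi powE.
have gp_ge0 k : 0 <= gp k by rewrite gpE sinr_p_ge0.
have soc_p k : Num.sqrt (gp k) *
    Num.sqrt (\sum_(j < K | j != k) cabs2 (hdot (h k) (p' j)) + 1)
    <= complex.Re (hdot (h k) (p' k)).
  by rewrite intf_p hp_real /= soc_ratioE ?cabs2_ge0 ?interference_gt0 // gpE.
have d_le k : k != k1 -> d k <= Num.sqrt (cabs2 (hdot (h k) pc')).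
  by rewrite rx_c => _; exact: soc_c.
have d_ge0_eE k : k != k1 -> 0 <= d k /\ hdot (h k) pc' = hdot (h k) pc'.
  by rewrite mulr_ge0 ?sqrtr_ge0.
have hp_ge0 k : 0 <= complex.Re (hdot (h k) (p' k)) /\
                complex.Im (hdot (h k) (p' k)) = 0 by rewrite hp_real /= sqrtr_ge0.
have soc_c1 : Num.sqrt s *
    Num.sqrt (\sum_(j < K) cabs2 (hdot (h k1) (p' j)) + 1)
    <= complex.Re (hdot (h k1) pc') by rewrite hc_real; exact: soc_c.
have d_def k : k != k1 -> Num.sqrt s *
    Num.sqrt (\sum_(j < K) cabs2 (hdot (h k) (p' j)) + 1) <= d k by [].
have hc_ge0 : 0 <= complex.Re (hdot (h k1) pc') /\ complex.Im (hdot (h k1) pc') = 0.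
  by rewrite hc_real /= sqrtr_ge0.
rewrite /feasB powE.
by do 10![split; first by []].
Qed.

End Problems.

Theorem proposition1 (R : realType) (M K : nat) (hM : (0 < M)%N) (hK : (0 < K)%N)
  (h : 'I_K -> 'I_M -> R[i]) (P : R) (u : 'I_K -> R) (mu Pc : R)
  (Rth : 'I_K -> R)
  (hP : 0 < P) (hu : forall k, 0 <= u k) (hu0 : exists k, u k != 0)
  (hmu : 0 <= mu) (hPc : 0 < Pc) (hRth : forall k, 0 <= Rth k) :
  let k1 : 'I_K := Ordinal hK in
  optvalA h P u mu Pc Rth = optvalB h P u mu Pc Rth k1 /\
  (forall pc p c gp s d e,
     optB h P u mu Pc Rth k1 pc p c gp s d e ->
     optA h P u mu Pc Rth pc p c (sinr_c h pc p) (sinr_p h p)).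
Proof.
move=> k1; split.
  apply/eqP; rewrite eq_le; apply/andP; split.
    apply: ereal_sup_le => _ [pc [p [c [gc [gp [feasA_pt ->]]]]]].
    have [pc' [p' [s [d [e [feasB_pt <-]]]]]] := feasA_feasB u mu Pc k1 feasA_pt.
    by exists pc', p', c, gp, s, d, e.
  apply: ge_ereal_sup => _ [pc [p [c [gp [s [d [e [feasB_pt ->]]]]]]]].
  have [feasA_pt Phi_le] := feasB_feasA hu hmu hPc feasB_pt.
  apply: (@le_trans _ _ (Phi u mu Pc pc p c (sinr_p h p))%:E); first by rewrite lee_fin.
  by apply: ereal_sup_ubound; exists pc, p, c, (sinr_c h pc p), (sinr_p h p).
move=> pc p c gp s d e [feasB_pt optimal].
have [feasA_pt Phi_le] := feasB_feasA hu hmu hPc feasB_pt.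
split=> // pc' p' c' gc' gp' feasA_pt'.
have [pc'' [p'' [s' [d' [e' [feasB_pt' <-]]]]]] := feasA_feasB u mu Pc k1 feasA_pt'.
exact: le_trans (optimal _ _ _ _ _ _ _ feasB_pt') Phi_le.
Qed.
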